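(* Let $n\ge 2$ and let $P=c_1\vee\dots\vee c_m$ be a Boolean formula in disjunctive normal form over variables $a_1,\dots,a_n$, where each clause $c_j$ is a conjunction of at least one literal. Let $X=\{x_1,\dots,x_n,t_1,\dots,t_n,f_1,\dots,f_n\}$ (all distinct) and set $x_{n+1}=x_1$. For each $j$ let $S_j=\{t_i: a_i \text{ occurs in } c_j\}\cup\{f_i:\neg a_i\text{ occurs in } c_j\}$. Let $\Sigma$ consist of the implications $\{x_i,t_i\}\rightarrow\{x_{i+1}\}$ and $\{x_i,f_i\}\rightarrow\{x_{i+1}\}$ for $1\le i\le n$, together with $S_j\rightarrow\{x_1\}$ for $1\le j\le m$. Then the closure system on $X$ associated with $\Sigma$ is a convex geometry if and only if $P$ is a tautology (true under every truth assignment).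
   Context: An implication on a set $X$ is a pair $A\rightarrow B$ with $A,B\subseteq X$, $B\ne\emptyset$. For a set $\Sigma$ of implications on $X$, the associated closure system $\langle X,\phi\rangle$ has as closed sets exactly the $S\subseteq X$ such that $A\subseteq S$ implies $B\subseteq S$ for every $(A\rightarrow B)\in\Sigma$, and $\phi(A)$ is the intersection of closed sets containing $A$. A convex geometry is a finite closure system with $\phi(\emptyset)=\emptyset$ satisfying the anti-exchange property: for every closed set $A\subsetneq X$ and all distinct $x,y\in X\setminus A$, $y\notin\phi(A\cup\{x\})$ or $x\notin\phi(A\cup\{y\})$ (equivalently, for every closed $A\subsetneq X$ there is $e\in X\setminus A$ with $A\cup\{e\}$ closed). *)

From mathcomp Require Import all_boot.
Set Implicit Arguments. Unset Strict Implicit. Unset Printing Implicit Defensive.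

Definition implication (T : finType) := ({set T} * {set T})%type.

Definition closed_for (T : finType) (Sigma : seq (implication T)) (S : {set T}) : bool :=
  all (fun p : implication T => (p.1 \subset S) ==> (p.2 \subset S)) Sigma.

Definition phi (T : finType) (Sigma : seq (implication T)) (A : {set T}) : {set T} :=
  \bigcap_(S : {set T} | closed_for Sigma S && (A \subset S)) S.

Definition convex_geometry (T : finType) (Sigma : seq (implication T)) : Prop :=
  phi Sigma set0 = set0 /\
  forall A : {set T}, closed_for Sigma A -> A != setT ->
  forall x y : T, x != y -> x \notin A -> y \notin A ->
    (y \notin phi Sigma (x |: A)) || (x \notin phi Sigma (y |: A)).

(* literal (true, i) = a_i ; literal (false, i) = ~ a_i *)
Definition literal (n : nat) := (bool * 'I_n)%type.
Definition clause (n : nat) := seq (literal n).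
Definition dnf (n : nat) := seq (clause n).

Definition eval_lit n (v : 'I_n -> bool) (l : literal n) : bool := v l.2 == l.1.
Definition eval_clause n (v : 'I_n -> bool) (c : clause n) : bool := all (eval_lit v) c.
Definition eval_dnf n (v : 'I_n -> bool) (P : dnf n) : bool := has (eval_clause v) P.
Definition tautology n (P : dnf n) : Prop := forall v : 'I_n -> bool, eval_dnf v P.

Definition Xset (n : nat) := ('I_n + 'I_n + 'I_n)%type.
Definition xv n (i : 'I_n) : Xset n := inl (inl i).
Definition tv n (i : 'I_n) : Xset n := inl (inr i).
Definition fv n (i : 'I_n) : Xset n := inr i.

Definition Sclause n (c : clause n) : {set Xset n} :=
  [set (if l.1 then tv l.2 else fv l.2) | l in c].

(* Sigma, where i0 is the first index (x_1 in the paper) and ordS i is i+1 mod n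
   (so x_{n+1} = x_1). *)
Definition Sigma_of n (i0 : 'I_n) (P : dnf n) : seq (implication (Xset n)) :=
  [seq ([set xv i; tv i], [set xv (ordS i)]) | i <- enum 'I_n] ++
  [seq ([set xv i; fv i], [set xv (ordS i)]) | i <- enum 'I_n] ++
  [seq (Sclause c, [set xv i0]) | c <- P].

Definition first_ord n (hn : 1 < n) : 'I_n := Ordinal (ltnW hn).

From mathcomp Require Import all_boot zify.
Set Implicit Arguments. Unset Strict Implicit. Unset Printing Implicit Defensive.

(* Only x's are ever generated, and x_(i+1) only through the cycle rules at i
   or (for x_1) through a clause rule.  Let A be closed and proper.  If some k
   has neither t_k nor f_k in A, the rules at k are dead, the cycle of x's opens
   into a path ending at x_k, and the closure of A + x_l stays inside A plus the
   arc from x_l to x_k; two such arcs are nested, which gives anti-exchange.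
   Otherwise A contains a truth assignment, and a clause true under it puts x_1
   and then the whole cycle into A.  Conversely, if v falsifies P, the literal
   set of v is closed and adding x_1 or x_2 to it generates every x, which
   violates anti-exchange. *)

Section ClosureSystem.
Variables (T : finType) (Sigma : seq (implication T)).

Lemma phi_min (B C : {set T}) :
  closed_for Sigma C -> B \subset C -> phi Sigma B \subset C.
Proof. by move=> cC BC; apply: bigcap_inf; rewrite cC BC. Qed.

Lemma phi_ext (B : {set T}) : B \subset phi Sigma B.
Proof. by apply/bigcapsP => S /andP[]. Qed.

Lemma phi_closed (B : {set T}) : closed_for Sigma (phi Sigma B).
Proof.
apply/allP => p Sp; apply/implyP => p1B; apply/bigcapsP => C /andP[cC BC].
have p1C : p.1 \subset C.
  by apply: subset_trans p1B _; apply: bigcap_inf; rewrite cC BC.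
by move/allP: cC => /(_ p Sp) /implyP; apply.
Qed.

Lemma notin_phi (B C : {set T}) z :
  closed_for Sigma C -> B \subset C -> z \notin C -> z \notin phi Sigma B.
Proof. by move=> cC BC; apply: contra; apply/subsetP/phi_min. Qed.

End ClosureSystem.

Section Cycle.
Variable n : nat.

Lemma ordS_val (i : 'I_n) : nat_of_ord (ordS i) = if i.+1 < n then i.+1 else 0.
Proof.
rewrite /=; case: ifP => lt_in; first by rewrite modn_small.
have -> : i.+1 = n by have := ltn_ord i; lia.
by rewrite modnn.
Qed.

Lemma ordS_neq (i : 'I_n) : 1 < n -> ordS i != i.
Proof.
move=> n_gt1; apply/negP => /eqP /(congr1 (@nat_of_ord n)).
by rewrite ordS_val; case: ifP => ?; lia.
Qed.

Lemma val_iter_ordS (j : 'I_n) k : val (iter k (@ordS n) j) = (j + k) %% n.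
Proof.
elim: k => [|k IHk]; first by rewrite addn0 modn_small.
by rewrite iterS /= IHk -addn1 modnDml -addnA addn1.
Qed.

Lemma iter_ordS_reach (j i : 'I_n) : iter (i + n - j) (@ordS n) j = i.
Proof.
apply: val_inj; rewrite val_iter_ordS.
have -> : j + (i + n - j) = i + n by have := ltn_ord j; lia.
by rewrite modnDr modn_small.
Qed.

(* The number of ordS-steps from ordS k to i; k itself comes last, at n.-1. *)
Definition pos_after (k i : 'I_n) : nat :=
  if k < i then i - k.+1 else i + n - k.+1.

Lemma pos_after_ordS k i : i != k -> pos_after k (ordS i) = (pos_after k i).+1.
Proof.
move=> /eqP ik; have {}ik : nat_of_ord i <> k by move=> /val_inj.
have := ltn_ord i; have := ltn_ord k.
by case E: (i.+1 < n); rewrite /pos_after ordS_val E /=; repeat case: ifP => ?; lia.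
Qed.

Lemma pos_after_inj k : injective (pos_after k).
Proof.
move=> i j; rewrite /pos_after => eq_pos; apply: val_inj => /=.
by move: eq_pos; have := ltn_ord i; have := ltn_ord j; have := ltn_ord k;
   repeat case: ifP => ?; lia.
Qed.

End Cycle.

Definition lit_elt n (l : literal n) : Xset n := if l.1 then tv l.2 else fv l.2.

Definition literal_set n (v : 'I_n -> bool) : {set Xset n} :=
  [set lit_elt (v i, i) | i : 'I_n].

Lemma lit_elt_inj n : injective (@lit_elt n).
Proof. by move=> [[] i] [[] j]; rewrite /lit_elt /= => // -[->]. Qed.

Lemma mem_literal_set n (v : 'I_n -> bool) (l : literal n) :
  (lit_elt l \in literal_set v) = eval_lit v l.
Proof.
apply/imsetP/eqP => [[i _ /lit_elt_inj ->] //|].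
by case: l => b j /= <-; exists j.
Qed.

Lemma xv_notin_literal_set n (v : 'I_n -> bool) i : xv i \notin literal_set v.
Proof. by apply/imsetP => -[k _]; rewrite /lit_elt /=; case: (v k). Qed.

Lemma Sclause_sub_literal_set n (v : 'I_n -> bool) (c : clause n) :
  (Sclause c \subset literal_set v) = eval_clause v c.
Proof.
apply/subsetP/allP => [sub l cl|evc _ /imsetP[l cl ->]].
  by rewrite -mem_literal_set sub //; apply/imsetP; exists l.
exact: (etrans (mem_literal_set v l) (evc l cl)).
Qed.

Section SigmaOf.
Variables (n : nat) (i0 : 'I_n) (P : dnf n).
Local Notation Sig := (Sigma_of i0 P).

Lemma closed_SigmaP (C : {set Xset n}) :
  closed_for Sig C <->
  [/\ forall i, xv i \in C -> tv i \in C -> xv (ordS i) \in C,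
      forall i, xv i \in C -> fv i \in C -> xv (ordS i) \in C &
      forall c, c \in P -> Sclause c \subset C -> xv i0 \in C].
Proof.
rewrite /closed_for /Sigma_of !all_cat !all_map.
split=> [/and3P[/allP Ht /allP Hf /allP HP]|[Ht Hf HP]]; last first.
  by apply/and3P; split; apply/allP => z zin /=;
     rewrite ?subUset !sub1set; apply/implyP; [case/andP; apply: Ht
       | case/andP; apply: Hf | apply: HP].
have enum_i i : i \in Finite.enum 'I_n by rewrite -enumT mem_enum.
split=> [i xi ti|i xi fi|c cP Sc].
- by have := Ht i (enum_i i); rewrite /= subUset !sub1set xi ti; apply.
- by have := Hf i (enum_i i); rewrite /= subUset !sub1set xi fi; apply.
- by have := HP c cP; rewrite /= Sc sub1set; apply.
Qed.

Lemma closed_set0 : all (fun c : clause n => c != [::]) P -> closed_for Sig set0.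
Proof.
move=> P_ne; apply/closed_SigmaP; split=> [i|i|c cP]; rewrite ?inE //.
move: (allP P_ne c cP); case: c cP => [|l c] //= _ _.
by apply: contraTT => _; apply/subsetPn; exists (lit_elt l);
   rewrite ?inE //; apply/imsetP; exists l; rewrite ?mem_head.
Qed.

Lemma xv_closed_all (C : {set Xset n}) (v : 'I_n -> bool) j i :
  closed_for Sig C -> literal_set v \subset C -> xv j \in C -> xv i \in C.
Proof.
move=> /closed_SigmaP[Ht Hf _] vC xj.
have step k : xv k \in C -> xv (ordS k) \in C.
  move=> xk; have := subsetP vC (lit_elt (v k, k)).
  rewrite mem_literal_set /eval_lit eqxx => /(_ isT).
  by rewrite /lit_elt /=; case: (v k); [apply: Ht | apply: Hf].
rewrite -(iter_ordS_reach j i); elim: (i + n - j) => [|k IHk] //=.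
exact: step.
Qed.

Lemma xv0_closed_eval (C : {set Xset n}) (v : 'I_n -> bool) :
  closed_for Sig C -> literal_set v \subset C -> eval_dnf v P -> xv i0 \in C.
Proof.
move=> /closed_SigmaP[_ _ HP] vC /hasP[c cP evc]; apply: HP cP _.
by apply: subset_trans vC; rewrite Sclause_sub_literal_set.
Qed.

Lemma literal_set_closed (v : 'I_n -> bool) :
  ~~ eval_dnf v P -> closed_for Sig (literal_set v).
Proof.
move=> Pv; apply/closed_SigmaP; split=> [i|i|c cP];
  rewrite ?(negbTE (xv_notin_literal_set _ _)) //.
by rewrite Sclause_sub_literal_set => evc; case/hasP: Pv; exists c.
Qed.

Definition is_xv (z : Xset n) : bool := if z is inl (inl _) then true else false.

Lemma notin_phi_nonx (A : {set Xset n}) z w :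
  z != w -> z \notin A -> ~~ is_xv z -> z \notin phi Sig (w |: A).
Proof.
move=> zw zA zx; apply: (@notin_phi _ _ _ (w |: A :|: [set u | is_xv u])).
- by apply/closed_SigmaP; split=> *; rewrite !inE orbT.
- exact: subsetUl.
- by rewrite !inE (negbTE zA) (negbTE zx) (negbTE zw).
Qed.

(* A together with x_l, ordS x_l, ..., x_k. *)
Definition add_arc (A : {set Xset n}) (k l : 'I_n) : {set Xset n} :=
  A :|: [set z | if z is inl (inl i) then pos_after k l <= pos_after k i else false].

Lemma add_arc_closed A k l : closed_for Sig A -> tv k \notin A -> fv k \notin A ->
  closed_for Sig (add_arc A k l).
Proof.
move=> /closed_SigmaP[Ht Hf HP] tk fk.
have xv_arc i : (xv i \in add_arc A k l) = (xv i \in A) || (pos_after k l <= pos_after k i).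
  by rewrite !inE.
have tv_arc i : (tv i \in add_arc A k l) = (tv i \in A) by rewrite !inE orbF.
have fv_arc i : (fv i \in add_arc A k l) = (fv i \in A) by rewrite !inE orbF.
have arc_step i : i != k -> pos_after k l <= pos_after k i ->
    xv (ordS i) \in add_arc A k l.
  by move=> ik li; rewrite xv_arc pos_after_ordS // (leqW li) orbT.
apply/closed_SigmaP; split=> [i|i|c cP Sc].
- rewrite xv_arc tv_arc => /orP[xi|li] ti; first by rewrite xv_arc Ht.
  by apply: arc_step li; apply: contraNneq tk => <-.
- rewrite xv_arc fv_arc => /orP[xi|li] fi; first by rewrite xv_arc Hf.
  by apply: arc_step li; apply: contraNneq fk => <-.
- rewrite inE (HP c cP) //; apply/subsetP => z zS.
  move: (subsetP Sc z zS); case/imsetP: zS => l0 _ ->.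
  by rewrite !inE; case: (l0.1); rewrite orbF.
Qed.

Lemma anti_exchange_open_cycle (A : {set Xset n}) k l m :
  closed_for Sig A -> tv k \notin A -> fv k \notin A ->
  l != m -> xv l \notin A -> xv m \notin A ->
  (xv m \notin phi Sig (xv l |: A)) || (xv l \notin phi Sig (xv m |: A)).
Proof.
move=> cA tk fk lm xl xm.
have arc_sub p : xv p |: A \subset add_arc A k p.
  by rewrite subUset sub1set !inE /= leqnn orbT subsetUl.
case: (ltnP (pos_after k m) (pos_after k l)) => ml; apply/orP; [left|right].
  apply: (notin_phi (add_arc_closed l cA tk fk) (arc_sub l)).
  by rewrite !inE (negbTE xm) /= -ltnNge.
apply: (notin_phi (add_arc_closed m cA tk fk) (arc_sub m)).
rewrite !inE (negbTE xl) /= -ltnNge ltn_neqAle ml andbT.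
by apply: contraNneq lm => /pos_after_inj ->.
Qed.

Lemma convex_geometry_of_tautology :
  all (fun c : clause n => c != [::]) P -> tautology P -> convex_geometry Sig.
Proof.
move=> P_ne tautP; split.
  by apply/eqP; rewrite -subset0 phi_min ?closed_set0.
move=> A cA AT x y xy xA yA.
case: (boolP (is_xv y)) => [yx|ny]; last by rewrite notin_phi_nonx // eq_sym.
case: (boolP (is_xv x)) => [xx|nx]; last by rewrite orbC notin_phi_nonx.
case: x y xy xA yA xx yx => [[l|]|] // [[m|]|] // lm xl xm _ _.
have {}lm : l != m by apply: contraNneq lm => ->.
have [[k /andP[tk fk]]|covered] :=
  altP (@existsP _ (fun k => (tv k \notin A) && (fv k \notin A))).
  exact: (anti_exchange_open_cycle cA tk fk lm xl xm).
pose v k := tv k \in A.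
have vA : literal_set v \subset A.
  apply/subsetP => _ /imsetP[k _ ->]; rewrite /lit_elt /v /=.
  by case: ifP => // tk; move/existsPn: covered => /(_ k); rewrite tk /= negbK.
have x0A := xv0_closed_eval cA vA (tautP v).
by rewrite (xv_closed_all l cA vA x0A) in xl.
Qed.

Lemma tautology_of_convex_geometry : 1 < n -> convex_geometry Sig -> tautology P.
Proof.
move=> n_gt1 [_ anti_exchange] v; apply/negPn/negP => Pv.
have cA := literal_set_closed Pv.
have nox i := xv_notin_literal_set v i.
have AT : literal_set v != setT.
  by apply: contraNneq (nox i0) => ->; rewrite inE.
have x01 : xv i0 != xv (ordS i0).
  by apply/eqP => -[e]; move: (ordS_neq i0 n_gt1); rewrite -e eqxx.
have all_x j i : xv i \in phi Sig (xv j |: literal_set v).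
  apply: (xv_closed_all i (phi_closed _ _)).
  - exact: subset_trans (subsetUr _ _) (phi_ext _ _).
  - exact: subsetP (phi_ext _ _) _ (setU11 _ _).
by move: (anti_exchange _ cA AT _ _ x01 (nox _) (nox _)); rewrite !all_x.
Qed.

End SigmaOf.

Theorem theorem5 (n : nat) (hn : 1 < n) (P : dnf n) :
  all (fun c : clause n => c != [::]) P ->
  (convex_geometry (Sigma_of (first_ord hn) P) <-> tautology P).
Proof.
move=> P_ne; split; first exact: tautology_of_convex_geometry.
exact: convex_geometry_of_tautology.
Qed.
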